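(* The EndPoint mechanism $2$-approximates the optimal Nash welfare.
   Context: Two facilities are located on $[0,1]$; $n\ge1$ agents (any $n$) have locations $x_1\le\dots\le x_n$ in $[0,1]$. For facilities at $y_1,y_2$, agent $i$'s utility is $u_i=1-\min(|x_i-y_1|,|x_i-y_2|)$; the Nash welfare is $\left(\prod_i u_i\right)^{1/n}$. The EndPoint mechanism places one facility at $x_1$ and the other at $x_n$. For a mechanism $M$, the approximation ratio of the Nash welfare is the supremum over all profiles $x$ (all numbers of agents) of $\mathrm{OPT}(x)/\mathrm{NW}(M(x))$, where $\mathrm{OPT}(x)$ is the maximum Nash welfare over all placements of two facilities in $[0,1]$; $M$ ''$\alpha$-approximates'' if this ratio equals $\alpha$. *)

From HB Require Import structures.
From mathcomp Require Import all_boot all_order all_algebra.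
From mathcomp Require Import all_classical all_reals exp.
Set Implicit Arguments. Unset Strict Implicit. Unset Printing Implicit Defensive.
Import Order.TTheory GRing.Theory Num.Theory.
Local Open Scope ring_scope.
Local Open Scope classical_set_scope.

Section Defs.
Variable R : realType.

Definition util (xi y1 y2 : R) : R := 1 - Num.min `|xi - y1| `|xi - y2|.

Definition nash_welfare (n : nat) (x : 'I_n.+1 -> R) (y1 y2 : R) : R :=
  (\prod_(i < n.+1) util (x i) y1 y2) `^ ((n.+1)%:R^-1).

Definition valid_profile (n : nat) (x : 'I_n.+1 -> R) : Prop :=
  (forall i, 0 <= x i <= 1) /\ (forall i j : 'I_n.+1, (i <= j)%N -> x i <= x j).

Definition OPT (n : nat) (x : 'I_n.+1 -> R) : R :=
  sup [set w | exists y1 y2 : R, 0 <= y1 <= 1 /\ 0 <= y2 <= 1 /\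
                                 w = nash_welfare x y1 y2].

Definition mechanism := forall n : nat, ('I_n.+1 -> R) -> R * R.

Definition EndPoint : mechanism := fun n x => (x ord0, x ord_max).

Definition approx_ratio (M : mechanism) : R :=
  sup [set r | exists (n : nat) (x : 'I_n.+1 -> R), valid_profile x /\
               r = OPT x / nash_welfare x (M n x).1 (M n x).2].

End Defs.

(** Under EndPoint every agent lies between the two facilities, which are at
   most 1 apart, so every utility is at least 1/2: the EndPoint welfare is at
   least 1/2 while no welfare exceeds 1, and the ratio is at most 2.
   Conversely, put one agent at 0, one at 1 and k+1 agents at 1/2.  EndPoint
   has welfare (1/2)^((k+1)/(k+3)), while facilities at 1/2 and 1 achieve
   (1/2)^(1/(k+3)); the ratio 2^(k/(k+3)) tends to 2. *)
From mathcomp Require Import all_boot all_order all_algebra.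
From mathcomp Require Import all_classical all_reals exp.
From mathcomp Require Import lra.

Set Implicit Arguments.
Unset Strict Implicit.
Unset Printing Implicit Defensive.
Import Order.TTheory GRing.Theory Num.Theory.
Local Open Scope ring_scope.
Local Open Scope classical_set_scope.

Lemma bernoulli_ineq (R : realDomainType) (d : R) (k : nat) :
  -1 <= d -> 1 + k%:R * d <= (1 + d) ^+ k.
Proof.
move=> d_ge; elim: k => [|k IH]; first by rewrite mul0r addr0 expr0.
have k_ge0 : 0 <= k%:R :> R by rewrite ler0n.
rewrite exprS -nat1r; nra.
Qed.

Lemma ler_of_exprn_bound (R : archiRealFieldType) (a s : R) (c : nat) :
  0 < a -> 0 <= s -> (forall k, a ^+ k <= s ^+ (k + c)) -> a <= s.
Proof.
move=> a_gt0 s_ge0 bound; rewrite leNgt; apply/negP => s_lt_a.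
have s_gt0 : 0 < s.
  rewrite lt0r s_ge0 andbT; apply/eqP => s0.
  by move: (bound 1%N); rewrite s0 expr1 expr0n /=; lra.
(* By Bernoulli, (a / s) ^+ k grows at least linearly, yet stays below s ^+ c. *)
pose d := a / s - 1.
have d_gt0 : 0 < d by rewrite subr_gt0 ltr_pdivlMr // mul1r.
have a_eq : a = s * (1 + d) by rewrite addrC subrK mulrC divfK // gt_eqF.
pose k := Num.bound (s ^+ c / d).
have k_big : s ^+ c < k%:R * d by rewrite -ltr_pdivrMr // archi_boundP // divr_ge0 ?exprn_ge0 // ltW.
have : (1 + d) ^+ k <= s ^+ c.
  by rewrite -(ler_pM2l (exprn_gt0 k s_gt0)) -exprMn -a_eq -exprD bound.
have := @bernoulli_ineq _ d k (ltW (lt_trans (ltrN10 R) d_gt0)); lra.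
Qed.

Lemma prod_ord_inner_const (S : comPzRingType) k (F : 'I_k.+3 -> S) c :
  (forall j : 'I_k.+3, (0 < j)%N -> (j < k.+2)%N -> F j = c) ->
  \prod_(i < k.+3) F i = F ord0 * c ^+ k.+1 * F ord_max.
Proof.
move=> F_inner; rewrite big_ord_recl big_ord_recr /= -mulrA.
congr (_ * (_ * _)); last by congr F; apply: val_inj.
rewrite -[in RHS](card_ord k.+1) -prodr_const; apply: eq_bigr => i _.
by apply: F_inner; rewrite /= /bump add1n // ltnS ltn_ord.
Qed.

Section NashWelfare.
Variable R : realType.
Implicit Types (a y : R) (n : nat).

Lemma util_le1 a y1 y2 : util a y1 y2 <= 1.
Proof. by rewrite /util lerBlDr lerDl le_min !normr_ge0. Qed.

Lemma util_ge0 a y1 y2 : 0 <= a <= 1 -> 0 <= y1 <= 1 -> 0 <= util a y1 y2.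
Proof.
move=> /andP[a_ge0 a_le1] /andP[y1_ge0 y1_le1].
rewrite /util subr_ge0 ge_min ler_norml; apply/orP; left; apply/andP; split; lra.
Qed.

Lemma util_between a y1 y2 : y1 <= a <= y2 -> y2 - y1 <= 1 -> 2^-1 <= util a y1 y2.
Proof.
move=> /andP[le_y1a le_ay2] gap; rewrite /util (ger0_norm (x := a - y1)); last lra.
rewrite (ler0_norm (x := a - y2)); last lra.
suff : Num.min (a - y1) (- (a - y2)) <= 2^-1 by lra.
by rewrite ge_min; case: (lerP (a - y1) 2^-1) => h; apply/orP; [left | right; lra].
Qed.

Lemma util_at_first a y : util a a y = 1.
Proof. by rewrite /util subrr normr0 min_l ?normr_ge0 // subr0. Qed.

Lemma util_at_second a y : util a y a = 1.
Proof. by rewrite /util subrr normr0 min_r ?normr_ge0 // subr0. Qed.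

Lemma expr_powR_invn (p : R) n : 0 <= p -> (p `^ (n.+1%:R^-1)) ^+ n.+1 = p.
Proof.
by move=> p_ge0; rewrite -powR_mulrn ?powR_ge0 // -powRrM mulVf ?powRr1 ?pnatr_eq0.
Qed.

Section Profile.
Variables (n : nat) (x : 'I_n.+1 -> R).
Hypothesis x01 : forall i, 0 <= x i <= 1.

Lemma nash_welfareXn y1 y2 : 0 <= y1 <= 1 ->
  nash_welfare x y1 y2 ^+ n.+1 = \prod_(i < n.+1) util (x i) y1 y2.
Proof.
move=> y1_01; apply: expr_powR_invn.
by apply: prodr_ge0 => i _; apply: util_ge0.
Qed.

Lemma nash_welfare_le1 y1 y2 : 0 <= y1 <= 1 -> nash_welfare x y1 y2 <= 1.
Proof.
move=> y1_01; rewrite -(@ler_pXn2r _ n.+1) ?nnegrE ?powR_ge0 // expr1n.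
rewrite nash_welfareXn //; apply: prodr_ile1 => i _.
by rewrite util_ge0 ?util_le1.
Qed.

Let welfares := [set w | exists y1 y2 : R, 0 <= y1 <= 1 /\ 0 <= y2 <= 1 /\
                                          w = nash_welfare x y1 y2].

Lemma has_sup_welfares : has_sup welfares.
Proof.
have I01 : 0 <= (0 : R) <= 1 by rewrite lexx ler01.
split; first by exists (nash_welfare x 0 0), 0, 0.
by exists 1 => _ [y1 [y2 [y1_01 [_ ->]]]]; apply: nash_welfare_le1.
Qed.

Lemma nash_welfare_le_OPT y1 y2 : 0 <= y1 <= 1 -> 0 <= y2 <= 1 ->
  nash_welfare x y1 y2 <= OPT x.
Proof. by move=> y1_01 y2_01; apply: (sup_upper_bound has_sup_welfares); exists y1, y2. Qed.

Lemma OPT_ge0 : 0 <= OPT x.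
Proof.
have I01 : 0 <= (0 : R) <= 1 by rewrite lexx ler01.
exact: le_trans (powR_ge0 _ _) (nash_welfare_le_OPT I01 I01).
Qed.

Lemma OPT_le1 : OPT x <= 1.
Proof.
apply: ge_sup; first by case: has_sup_welfares.
by move=> _ [y1 [y2 [y1_01 [_ ->]]]]; apply: nash_welfare_le1.
Qed.

End Profile.

Lemma EndPoint_welfare_ge_half n (x : 'I_n.+1 -> R) : valid_profile x ->
  2^-1 <= nash_welfare x (x ord0) (x ord_max).
Proof.
move=> [x01 x_sorted].
rewrite -(@ler_pXn2r _ n.+1) ?nnegrE ?powR_ge0 ?invr_ge0 // nash_welfareXn //.
rewrite -[n.+1 in X in X <= _]card_ord -prodr_const.
apply: ler_prod => i _; rewrite invr_ge0 ler0n util_between //.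
  by rewrite !x_sorted // -ltnS.
by move: (x01 ord0) (x01 ord_max) => /andP[? ?] /andP[? ?]; lra.
Qed.

Definition EndPoint_ratio n (x : 'I_n.+1 -> R) : R :=
  OPT x / nash_welfare x (x ord0) (x ord_max).

Lemma EndPoint_ratio_ge0 n (x : 'I_n.+1 -> R) : valid_profile x -> 0 <= EndPoint_ratio x.
Proof. by move=> [x01 _]; rewrite divr_ge0 ?powR_ge0 ?OPT_ge0. Qed.

Lemma EndPoint_ratio_le2 n (x : 'I_n.+1 -> R) : valid_profile x -> EndPoint_ratio x <= 2.
Proof.
move=> xv; have half_le := EndPoint_welfare_ge_half xv.
rewrite ler_pdivrMr; last by apply: lt_le_trans half_le; lra.
have := OPT_le1 xv.1; lra.
Qed.

Section MiddleProfile.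
Variable k : nat.
Implicit Types i j : 'I_k.+3.

Definition middle_profile : 'I_k.+3 -> R :=
  fun i => if val i == 0%N then 0 else if val i == k.+2 then 1 else 2^-1.

Lemma middle_profile_first i : val i = 0%N -> middle_profile i = 0.
Proof. by rewrite /middle_profile => ->. Qed.

Lemma middle_profile_last i : val i = k.+2 -> middle_profile i = 1.
Proof. by rewrite /middle_profile => ->; rewrite eqxx. Qed.

Lemma middle_profile_inner i : (0 < i)%N -> (i < k.+2)%N -> middle_profile i = 2^-1.
Proof. by move=> i_gt0 i_lt; rewrite /middle_profile gtn_eqF // ltn_eqF. Qed.

Lemma middle_profile_01 i : 0 <= middle_profile i <= 1.
Proof. by rewrite /middle_profile; case: ifP => _; [|case: ifP => _]; apply/andP; split; lra. Qed.

Lemma middle_profile_valid : valid_profile middle_profile.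
Proof.
split; first exact: middle_profile_01.
move=> i j le_ij; have [i0|i_gt0] := posnP i.
  by rewrite (middle_profile_first i0); case/andP: (middle_profile_01 j).
have [j_lt|j_ge] := ltnP j k.+2; last first.
  have j_last : val j = k.+2 by apply/eqP; rewrite eqn_leq j_ge andbT -ltnS ltn_ord.
  by rewrite (middle_profile_last j_last); case/andP: (middle_profile_01 i).
rewrite (middle_profile_inner i_gt0 (leq_ltn_trans le_ij j_lt)).
by rewrite (middle_profile_inner (leq_trans i_gt0 le_ij) j_lt).
Qed.

Lemma middle_profile_EndPoint_prod :
  \prod_(i < k.+3) util (middle_profile i) (middle_profile ord0) (middle_profile ord_max)
  = 2^-1 ^+ k.+1.
Proof.
rewrite middle_profile_first // middle_profile_last // (@prod_ord_inner_const _ _ _ 2^-1).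
  by rewrite middle_profile_first // middle_profile_last // util_at_first util_at_second mul1r mulr1.
move=> j j_gt0 j_lt; rewrite middle_profile_inner // /util subr0.
by rewrite ger0_norm ?ler0_norm ?min_l; lra.
Qed.

Lemma middle_profile_inner_prod :
  \prod_(i < k.+3) util (middle_profile i) 2^-1 1 = 2^-1.
Proof.
rewrite (@prod_ord_inner_const _ _ _ 1).
  rewrite middle_profile_first // middle_profile_last // util_at_second expr1n !mulr1.
  by rewrite /util !sub0r !normrN !ger0_norm ?min_l; lra.
by move=> j j_gt0 j_lt; rewrite middle_profile_inner // util_at_first.
Qed.

Lemma middle_profile_ratio : 2 ^+ k <= EndPoint_ratio middle_profile ^+ k.+3.
Proof.
have [x01 _] := middle_profile_valid.
rewrite /EndPoint_ratio; set A := nash_welfare middle_profile 2^-1 1.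
set B := nash_welfare _ (middle_profile ord0) _.
have B_gt0 : 0 < B by apply: lt_le_trans (EndPoint_welfare_ge_half middle_profile_valid); lra.
have half01 : 0 <= (2^-1 : R) <= 1 by apply/andP; split; lra.
have one01 : 0 <= (1 : R) <= 1 by rewrite ler01 lexx.
have AB_le : A / B <= OPT middle_profile / B.
  by rewrite ler_pM2r ?invr_gt0 //; apply: nash_welfare_le_OPT.
have AB_ge0 : 0 <= A / B by rewrite divr_ge0 ?powR_ge0 ?ltW.
apply: le_trans (_ : (A / B) ^+ k.+3 <= _); last first.
  by apply: lerXn2r; rewrite // nnegrE (le_trans AB_ge0).
rewrite expr_div_n !nash_welfareXn // middle_profile_EndPoint_prod middle_profile_inner_prod.
by rewrite exprVn invrK exprS mulrA mulVf ?mul1r ?pnatr_eq0.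
Qed.

End MiddleProfile.

End NashWelfare.

Arguments middle_profile {R} k.

Theorem theorem14 (R : realType) : approx_ratio (@EndPoint R) = 2.
Proof.
rewrite /approx_ratio; set S := [set r | _].
have S_ratio n (x : 'I_n.+1 -> R) : valid_profile x -> S (EndPoint_ratio x).
  by move=> xv; exists n, x.
have S_ub : ubound S 2 by move=> _ [n [x [xv ->]]]; exact: EndPoint_ratio_le2.
have S_ne : S !=set0 by exists (EndPoint_ratio (middle_profile 0)); apply/S_ratio/middle_profile_valid.
have ratio_le_sup k : EndPoint_ratio (middle_profile k) <= sup S.
  by apply: sup_upper_bound; [split; last exists 2 | apply/S_ratio/middle_profile_valid].
have ratio_ge0 k : 0 <= EndPoint_ratio (middle_profile k) :> R.
  exact/EndPoint_ratio_ge0/middle_profile_valid.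
apply/le_anti/andP; split; first exact: ge_sup.
apply: (@ler_of_exprn_bound _ _ _ 3); [lra | exact: le_trans (ratio_ge0 0%N) _ | move=> k].
rewrite addn3; apply: le_trans (middle_profile_ratio R k) _.
by apply: lerXn2r; rewrite // nnegrE (le_trans (ratio_ge0 k)).
Qed.
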